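(* Let $\mathcal G$ be a groupoid and $\mathcal C$ a finitely aligned left-cancellative small category such that $(\mathcal G,\mathcal C)$ is a matched pair. Then the Zappa–Szép product $\mathcal C\bowtie\mathcal G$ is left-cancellative and finitely aligned.
   Context: Categories are small, identified with morphism sets; $r,s$ range/source. Left-cancellative: $ab=ac\Rightarrow b=c$; finitely aligned: for all $a,b$ there is finite $F$ with $a\mathcal C\cap b\mathcal C=\bigcup_{c\in F}c\mathcal C$, where $c\mathcal C=\{cc'\}$. A matched pair $(\mathcal G,\mathcal C)$ with $\mathcal G^0=\mathcal C^0$ consists of a left action $g\triangleright c\in\mathcal C$ of $\mathcal G$ on $\mathcal C$ and a right action $g\triangleleft c\in\mathcal G$ of $\mathcal C$ on $\mathcal G$ (defined when $s(g)=r(c)$; satisfying $r(c)\triangleright c=c$, $g\triangleright s(g)=r(g)$, $r(g\triangleright c)=r(g)$, $(gh)\triangleright c=g\triangleright(h\triangleright c)$ and the symmetric right-action axioms) such that $s(g\triangleright c)=r(g\triangleleft c)$, $g\triangleright(c_1c_2)=(g\triangleright c_1)((g\triangleleft c_1)\triangleright c_2)$ and $(g_1g_2)\triangleleft c=(g_1\triangleleft(g_2\triangleright c))(g_2\triangleleft c)$. The Zappa–Szép product $\mathcal C\bowtie\mathcal G$ has morphisms $cg$ ($s(c)=r(g)$), $r(cg)=r(c)$, $s(cg)=s(g)$, and product $c_1g_1c_2g_2=c_1(g_1\triangleright c_2)(g_1\triangleleft c_2)g_2$; each element factors uniquely as $cg$. *)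

From Stdlib Require Import List.
Import ListNotations.
Set Implicit Arguments.

(** A small category with object type [O]: morphisms [Mor], range [rg],
    source [sr], identities [idm], composition [comp a b] = "a b"
    (meaningful when [sr a = rg b]). *)
Record Cat (O : Type) := {
  Mor : Type;
  rg : Mor -> O;
  sr : Mor -> O;
  idm : O -> Mor;
  comp : Mor -> Mor -> Mor;
  rg_idm : forall x, rg (idm x) = x;
  sr_idm : forall x, sr (idm x) = x;
  rg_comp : forall a b, sr a = rg b -> rg (comp a b) = rg a;
  sr_comp : forall a b, sr a = rg b -> sr (comp a b) = sr b;
  idm_l : forall a, comp (idm (rg a)) a = a;
  idm_r : forall a, comp a (idm (sr a)) = a;
  comp_assoc : forall a b c, sr a = rg b -> sr b = rg c ->
    comp a (comp b c) = comp (comp a b) c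
}.
Arguments Mor {O}.
Arguments rg {O} _ _.
Arguments sr {O} _ _.
Arguments idm {O} _ _.
Arguments comp {O} _ _ _.

Definition IsGroupoid {O} (G : Cat O) : Prop :=
  forall g : Mor G, exists h : Mor G,
    rg G h = sr G g /\ sr G h = rg G g /\
    comp G g h = idm G (rg G g) /\ comp G h g = idm G (sr G g).

(** Generic notions on "raw" category data: morphisms are the elements of
    [M] satisfying [V]; [r], [s], [m] are range, source and composition. *)
Definition left_cancellative_raw {O M : Type} (V : M -> Prop)
  (r s : M -> O) (m : M -> M -> M) : Prop :=
  forall a b c, V a -> V b -> V c -> s a = r b -> s a = r c ->
    m a b = m a c -> b = c.

Definition in_right_ideal {O M : Type} (V : M -> Prop)
  (r s : M -> O) (m : M -> M -> M) (a x : M) : Prop :=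
  exists c', V c' /\ s a = r c' /\ x = m a c'.

Definition finitely_aligned_raw {O M : Type} (V : M -> Prop)
  (r s : M -> O) (m : M -> M -> M) : Prop :=
  forall a b, V a -> V b ->
    exists F : list M, (forall c, In c F -> V c) /\
      forall x, V x ->
        ((in_right_ideal V r s m a x /\ in_right_ideal V r s m b x) <->
         exists c, In c F /\ in_right_ideal V r s m c x).

Definition left_cancellative {O} (C : Cat O) : Prop :=
  left_cancellative_raw (fun _ => True) (rg C) (sr C) (comp C).

Definition finitely_aligned {O} (C : Cat O) : Prop :=
  finitely_aligned_raw (fun _ => True) (rg C) (sr C) (comp C).

(** Matched pair (G, C) with common object set O:
    [act g c] = g |> c in C, [res g c] = g <| c in G, for sr g = rg c. *)
Record MatchedPair {O} (G C : Cat O) := {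
  act : Mor G -> Mor C -> Mor C;
  res : Mor G -> Mor C -> Mor G;
  act_id : forall c, act (idm G (rg C c)) c = c;
  act_unit : forall g, act g (idm C (sr G g)) = idm C (rg G g);
  act_rg : forall g c, sr G g = rg C c -> rg C (act g c) = rg G g;
  act_comp : forall g h c, sr G g = rg G h -> sr G h = rg C c ->
    act (comp G g h) c = act g (act h c);
  res_id : forall g, res g (idm C (sr G g)) = g;
  res_unit : forall c, res (idm G (rg C c)) c = idm G (sr C c);
  res_sr : forall g c, sr G g = rg C c -> sr G (res g c) = sr C c;
  res_comp : forall g c1 c2, sr G g = rg C c1 -> sr C c1 = rg C c2 ->
    res g (comp C c1 c2) = res (res g c1) c2;
  mp_src : forall g c, sr G g = rg C c -> sr C (act g c) = rg G (res g c);
  mp_act_comp : forall g c1 c2, sr G g = rg C c1 -> sr C c1 = rg C c2 ->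
    act g (comp C c1 c2) = comp C (act g c1) (act (res g c1) c2);
  mp_res_comp : forall g1 g2 c, sr G g1 = rg G g2 -> sr G g2 = rg C c ->
    res (comp G g1 g2) c = comp G (res g1 (act g2 c)) (res g2 c)
}.
Arguments act {O G C} m _ _.
Arguments res {O G C} m _ _.

(** Zappa--Szep product C |><| G: morphisms are pairs (c, g) with
    sr c = rg g, r(cg) = r(c), s(cg) = s(g),
    (c1 g1)(c2 g2) = c1 (g1 |> c2) (g1 <| c2) g2. *)
Section ZS.
Context {O : Type} {G C : Cat O} (mp : MatchedPair G C).

Definition zs_valid (p : Mor C * Mor G) : Prop := sr C (fst p) = rg G (snd p).
Definition zs_rg (p : Mor C * Mor G) : O := rg C (fst p).
Definition zs_sr (p : Mor C * Mor G) : O := sr G (snd p).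
Definition zs_comp (p q : Mor C * Mor G) : Mor C * Mor G :=
  (comp C (fst p) (act mp (snd p) (fst q)),
   comp G (res mp (snd p) (fst q)) (snd q)).
End ZS.

Definition zs_left_cancellative {O} {G C : Cat O} (mp : MatchedPair G C) : Prop :=
  left_cancellative_raw zs_valid zs_rg zs_sr (zs_comp mp).

Definition zs_finitely_aligned {O} {G C : Cat O} (mp : MatchedPair G C) : Prop :=
  finitely_aligned_raw zs_valid zs_rg zs_sr (zs_comp mp).

(* Because G is a groupoid, every g |> - is a bijection and every morphism of G
   can be absorbed on the right, so the principal right ideal (a g)(C |><| G)
   consists exactly of the pairs (c, h) with c in aC.  Intersections of
   principal ideals in the product are therefore computed in C, witnessed by
   the pairs (c, 1).  Left cancellation of a g splits into cancellation of a
   in C, injectivity of g |> -, and cancellation in G. *)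
From Stdlib Require Import List.

Section Groupoid.
Context {O : Type} (G : Cat O).
Hypothesis HG : IsGroupoid G.

Lemma groupoid_comp_inj_l u a b : sr G u = rg G a -> sr G u = rg G b ->
  comp G u a = comp G u b -> a = b.
Proof.
  intros Ha Hb E.
  destruct (HG u) as [v [Hv1 [Hv2 [_ Hvu]]]].
  assert (K : forall x, sr G u = rg G x -> comp G v (comp G u x) = x).
  { intros x Hx. rewrite (comp_assoc G); try congruence.
    rewrite Hvu, Hx. apply idm_l. }
  rewrite <- (K a Ha), <- (K b Hb), E. reflexivity.
Qed.

Lemma groupoid_comp_surj_l u y : rg G y = rg G u ->
  exists k, sr G u = rg G k /\ comp G u k = y.
Proof.
  intros Hy.
  destruct (HG u) as [v [Hv1 [Hv2 [Huv _]]]].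
  exists (comp G v y). split.
  - rewrite (rg_comp G); congruence.
  - rewrite (comp_assoc G); try congruence.
    rewrite Huv, <- Hy. apply idm_l.
Qed.

End Groupoid.

Section MatchedPairOverGroupoid.
Context {O : Type} {G C : Cat O} (mp : MatchedPair G C).
Hypothesis HG : IsGroupoid G.

Lemma act_inj g c1 c2 : sr G g = rg C c1 -> sr G g = rg C c2 ->
  act mp g c1 = act mp g c2 -> c1 = c2.
Proof.
  intros H1 H2 E.
  destruct (HG g) as [v [Hv1 [Hv2 [_ Hvg]]]].
  assert (K : forall x, sr G g = rg C x -> act mp v (act mp g x) = x).
  { intros x Hx. rewrite <- (act_comp mp); try congruence.
    rewrite Hvg, Hx. apply act_id. }
  rewrite <- (K c1 H1), <- (K c2 H2), E. reflexivity.
Qed.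

Lemma act_surj g d : rg C d = rg G g ->
  exists c, sr G g = rg C c /\ act mp g c = d.
Proof.
  intros Hd.
  destruct (HG g) as [v [Hv1 [Hv2 [Hgv _]]]].
  exists (act mp v d). split.
  - rewrite (act_rg mp); congruence.
  - rewrite <- (act_comp mp); try congruence.
    rewrite Hgv, <- Hd. apply act_id.
Qed.

Lemma zs_in_right_ideal_iff a g x : zs_valid (a, g) -> zs_valid x ->
  in_right_ideal zs_valid zs_rg zs_sr (zs_comp mp) (a, g) x <->
  in_right_ideal (fun _ => True) (rg C) (sr C) (comp C) a (fst x).
Proof.
  destruct x as [x1 x2]. unfold zs_valid, zs_rg, zs_sr, zs_comp; simpl.
  intros Va Vx. split.
  - intros [[c k] [_ [Hc Hx]]]; simpl in *. injection Hx as Hx1 _.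
    exists (act mp g c). repeat split; [|exact Hx1].
    rewrite (act_rg mp); auto.
  - intros [d [_ [Hd Hx1]]].
    destruct (act_surj g d) as [c [Hc Hgc]]; [congruence|].
    assert (Hus : sr G (res mp g c) = sr C c) by (apply (res_sr mp); auto).
    assert (Hur : rg G (res mp g c) = rg G x2).
    { rewrite <- (mp_src mp), Hgc, <- Vx, Hx1 by auto.
      symmetry. apply (sr_comp C); auto. }
    destruct (groupoid_comp_surj_l G HG (res mp g c) x2) as [k [Hk Huk]];
      [congruence|].
    exists (c, k); simpl. repeat split; [congruence | exact Hc |].
    rewrite Hgc, Huk, <- Hx1. reflexivity.
Qed.

Lemma zs_left_cancellative_of_cat : left_cancellative C -> zs_left_cancellative mp.
Proof.
  intros LC [a g] [c1 g1] [c2 g2].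
  unfold zs_valid, zs_sr, zs_rg, zs_comp; simpl.
  intros Va V1 V2 H1 H2 E. injection E as E1 E2.
  assert (Hact : act mp g c1 = act mp g c2).
  { apply (LC a); auto; rewrite (act_rg mp); congruence. }
  assert (Ec : c1 = c2) by (apply (act_inj g); auto).
  subst c2. f_equal.
  apply (groupoid_comp_inj_l G HG (res mp g c1)); auto;
    rewrite (res_sr mp); auto.
Qed.

Lemma zs_valid_idm c : zs_valid (c, idm G (sr C c)).
Proof. unfold zs_valid; simpl. symmetry. apply rg_idm. Qed.

Lemma zs_finitely_aligned_of_cat : finitely_aligned C -> zs_finitely_aligned mp.
Proof.
  intros FA [a g] [b h] Va Vb.
  destruct (FA a b I I) as [F [_ HF]].
  exists (map (fun c => (c, idm G (sr C c))) F). split.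
  - intros p Hp. apply in_map_iff in Hp. destruct Hp as [c [<- _]].
    apply zs_valid_idm.
  - intros x Vx.
    rewrite (zs_in_right_ideal_iff a g x), (zs_in_right_ideal_iff b h x),
      (HF (fst x) I) by auto.
    split.
    + intros [c [Hc Hi]]. exists (c, idm G (sr C c)). split.
      * apply in_map_iff. eauto.
      * apply zs_in_right_ideal_iff; auto using zs_valid_idm.
    + intros [p [Hp Hi]]. apply in_map_iff in Hp. destruct Hp as [c [<- Hc]].
      exists c. split; auto.
      apply zs_in_right_ideal_iff in Hi; auto using zs_valid_idm.
Qed.

End MatchedPairOverGroupoid.

Theorem lemma3p5 (O : Type) (G C : Cat O) (mp : MatchedPair G C) :
  IsGroupoid G -> left_cancellative C -> finitely_aligned C ->
  zs_left_cancellative mp /\ zs_finitely_aligned mp.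
Proof.
  intros HG LC FA. split.
  - exact (zs_left_cancellative_of_cat mp HG LC).
  - exact (zs_finitely_aligned_of_cat mp HG FA).
Qed.
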